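(* Suppose Assumptions 1, 2, 3 and 6 hold. Then for every sufficiently large $n$, $$R_n(\mathbf w_n^* )\ \ge\ \tfrac12\,R_n(m_n^* ),$$ and consequently $R_n(m_n^* )\asymp R_n(\mathbf w_n^* )$ (equivalently, $\Delta_n\le \tfrac12 R_n(m_n^* )$ for all large $n$). No restriction on the number $M_n$ of candidate models is needed.
   Context: Setting. For each sample size $n$ one observes $\mathbf y=\boldsymbol\mu+\boldsymbol\varepsilon\in\mathbb R^n$ with $\boldsymbol\mu=\mathbf X\boldsymbol\beta$, where $\mathbf X=(x_{ij})$ is a nonstochastic $n\times p_n$ matrix with $p_n<n$, $\boldsymbol\beta\in\mathbb R^{p_n}$, $E(\boldsymbol\varepsilon)=\mathbf 0$ and $\mathrm{Cov}(\boldsymbol\varepsilon)=\boldsymbol\Omega$ positive definite (all of these may depend on $n$). Fix integers $0=\nu_0<\nu_1<\cdots<\nu_{q_n}=p_n$. For $m=1,\dots,q_n$, $\mathbf X_m$ denotes the $n\times\nu_m$ matrix formed by the first $\nu_m$ columns of $\mathbf X$ (assumed of full column rank), $\mathbf P_m=\mathbf X_m(\mathbf X_m^\top\mathbf X_m)^{-1}\mathbf X_m^\top$, and $\mathbf P_0=\mathbf 0$. The candidate (nested) models are $m\in\{1,\dots,M_n\}$ with $2\le M_n\le q_n$. For a model $m$, $\hat{\boldsymbol\mu}_m=\mathbf P_m\mathbf y$ and $R_n(m)=E\|\hat{\boldsymbol\mu}_m-\boldsymbol\mu\|^2$. For $\mathbf w=(w_1,\dots,w_{M_n})^\top$, $\mathbf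 P(\mathbf w)=\sum_{m=1}^{M_n}w_m\mathbf P_m$, $\hat{\boldsymbol\mu}(\mathbf w)=\mathbf P(\mathbf w)\mathbf y$ and $R_n(\mathbf w)=E\|\hat{\boldsymbol\mu}(\mathbf w)-\boldsymbol\mu\|^2$. Let $\mathcal W_n=\{\mathbf w\in[0,1]^{M_n}:\sum_{m}w_m=1\}$. Let $m_n^*$ be the minimizer of $R_n(m)$ over $\{1,\dots,M_n\}$, $m_n^{**}$ the minimizer of $R_n(m)$ over $\{1,\dots,q_n\}$, and $\mathbf w_n^*$ the minimizer of $R_n(\mathbf w)$ over $\mathcal W_n$ (all assumed unique). Put $\Delta_n=R_n(m_n^* )-R_n(\mathbf w_n^* )$. Grouped variable importance: for $m=1,\dots,q_n$, $$\theta_{n,m}=\frac{n^{-1}\boldsymbol\mu^\top(\mathbf P_m-\mathbf P_{m-1})\boldsymbol\mu}{\mathrm{tr}\{(\mathbf P_m-\mathbf P_{m-1})\boldsymbol\Omega\}},$$ and $d_n=\max\{m\in\{1,\dots,q_n\}:\theta_{n,m}>0\}$. Assumption 1: $\|\boldsymbol\mu\|^2/n=O(1)$. Assumption 2: there are constants $0<c_1\le c_2<\infty$ with $c_1<\lambda_{\min}(\boldsymbol\Omega)\le\lambda_{\max}(\boldsymbol\Omega)<c_2$ for all $n$. Assumption 3: for each sufficiently large $n$, $\theta_{n,1}\ge\theta_{n,2}\ge\cdots\ge\theta_{n,q_n}$. Assumption 6: for each sufficiently large $n$, $R_n(m)$ is first decreasing and then increasing as $m$ runs from $1$ to $d_n$: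 there is $m_n'\in\{1,\dots,d_n-1\}$ with $R_n(m)<R_n(m-1)$ for $2\le m\le m_n'$, $R_n(m)\ge R_n(m-1)$ for $m_n'<m\le d_n$, and $R_n(d_n)>R_n(d_n-1)$. Notation: for positive deterministic sequences, $a_n\asymp b_n$ means $a_n/b_n$ and $b_n/a_n$ are both bounded for all large $n$. *)

From HB Require Import structures.
From mathcomp Require Import all_boot all_order all_algebra.
From mathcomp Require Import all_classical all_reals all_analysis.
Set Implicit Arguments. Unset Strict Implicit. Unset Printing Implicit Defensive.
Import Order.TTheory GRing.Theory Num.Theory.
Local Open Scope ring_scope.

Section Defs.
Variable R : realType.

(* X_k : the n x k matrix formed by the first k columns of X (k <= p). *)
Definition colsfirst (n p : nat) (X : 'M[R]_(n, p)) (k : nat) : 'M[R]_(n, k) :=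
  \matrix_(i < n, j < k) oapp (X i) 0 (insub (val j) : option 'I_p).

Definition projmx (n k : nat) (A : 'M[R]_(n, k)) : 'M[R]_n :=
  A *m invmx (A^T *m A) *m A^T.

(* P_m, with nu m = nu_m ; P_0 = 0 automatically since nu 0 = 0 *)
Definition Pm (n p : nat) (X : 'M[R]_(n, p)) (nu : nat -> nat) (m : nat) : 'M[R]_n :=
  projmx (colsfirst X (nu m)).

(* P(w) = sum_{m=1}^{M} w_m P_m ; weight of model m is w 0 (m-1) *)
Definition Pw (n p : nat) (X : 'M[R]_(n, p)) (nu : nat -> nat) (M : nat)
  (w : 'rV[R]_M) : 'M[R]_n :=
  \sum_(m < M) w 0 m *: Pm X nu m.+1.

Definition in_simplex (M : nat) (w : 'rV[R]_M) : Prop :=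
  (forall m : 'I_M, 0 <= w 0 m <= 1) /\ \sum_(m < M) w 0 m = 1.

Definition theta (n p : nat) (X : 'M[R]_(n, p)) (nu : nat -> nat)
  (mu : 'cV[R]_n) (Omega : 'M[R]_n) (m : nat) : R :=
  (n%:R^-1 * (mu^T *m (Pm X nu m - Pm X nu m.-1) *m mu) 0 0)
  / \tr ((Pm X nu m - Pm X nu m.-1) *m Omega).

(* d_n = max { m in 1..q : theta_m > 0 }  (0 if the set is empty) *)
Definition dn (n p : nat) (X : 'M[R]_(n, p)) (nu : nat -> nat)
  (mu : 'cV[R]_n) (Omega : 'M[R]_n) (q : nat) : nat :=
  (\max_(1 <= m < q.+1 | (0 < theta X nu mu Omega m)%R) m)%N.

Definition sqnorm (n : nat) (v : 'cV[R]_n) : R := \sum_(i < n) v i 0 ^+ 2.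

Definition risk d (T : measurableType d) (P : probability T R) (n : nat)
  (mu : 'cV[R]_n) (eps : 'I_n -> T -> R) (A : 'M[R]_n) : \bar R :=
  ('E_P[fun t => sqnorm (A *m (mu + \col_i eps i t) - mu)])%E.

End Defs.

From HB Require Import structures.
From mathcomp Require Import all_boot all_order all_algebra.
From mathcomp Require Import all_classical all_reals all_analysis.
From mathcomp Require Import ring lra zify.
Set Implicit Arguments. Unset Strict Implicit. Unset Printing Implicit Defensive.
Import Order.TTheory GRing.Theory Num.Theory.
Local Open Scope ring_scope.

(* The risk of the linear estimator A y is |A mu - mu|^2 + tr (A Omega A^T).
   Extend the nested projections 0 = P_0 <= P_1 <= ... <= P_M by P_(M+1) = I:
   the increments D_j = P_(j+1) - P_j (0 <= j <= M) are orthogonal projections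
   with sum I, and sum_m w_m P_m = sum_j g_j D_j for the tail weights
   g_j = sum_(m > j) w_m, so that g_0 = 1 and g_M = 0.  Hence
     R(w) = sum_j ((1 - g_j)^2 a_j + g_j^2 b_j),  a_j = |D_j mu|^2,  b_j = tr (D_j Omega),
   and the single model k has g_j = [j < k].  Assumption 3 says that a_j / b_j
   decreases in j, so a single model can pick min (a_j, b_j) in every term with
   0 < j < M, and min (a, b) <= 2 ((1 - g)^2 a + g^2 b) for every g.  Therefore
   R(m* ) <= R(k) <= 2 R(w* ); conversely R(w* ) <= R(m* ) because single models
   are vertices of the simplex. *)

Section Expansion.
Context {R : realType}.

Lemma sqrrD_sum n (x : R) (y : 'I_n -> R) :
  (x + \sum_k y k) ^+ 2 = x ^+ 2 + \sum_k 2 * x * y k + \sum_k \sum_l y k * y l.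
Proof.
rewrite sqrrD; congr (_ + _ + _); first by rewrite -mulr_natl mulrA mulr_sumr.
by rewrite expr2 big_distrl /=; apply: eq_bigr => k _; rewrite big_distrr.
Qed.

Lemma sqnormD_mul n (c e : 'cV[R]_n) (A : 'M[R]_n) :
  sqnorm (c + A *m e) = sqnorm c + \sum_k (2 * \sum_i c i 0 * A i k) * e k 0
    + \sum_k \sum_l (\sum_i A i k * A i l) * (e k 0 * e l 0).
Proof.
rewrite /sqnorm; under eq_bigr => i _ do rewrite !mxE sqrrD_sum.
rewrite !big_split /=; congr (_ + _ + _).
  rewrite exchange_big /=; apply: eq_bigr => k _.
  by rewrite !mulr_sumr !mulr_suml; apply: eq_bigr => i _; ring.
rewrite exchange_big /=; apply: eq_bigr => k _.
rewrite exchange_big /=; apply: eq_bigr => l _.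
by rewrite mulr_suml; apply: eq_bigr => i _; ring.
Qed.

Lemma mxtrace_mul_trmx n (A Om : 'M[R]_n) :
  \tr (A *m Om *m A^T) = \sum_k \sum_l (\sum_i A i k * A i l) * Om k l.
Proof.
rewrite /mxtrace.
under eq_bigr => i _ do (rewrite mxE; under eq_bigr => l _ do rewrite !mxE big_distrl /=).
rewrite exchange_big /=; under eq_bigr => l _ do rewrite exchange_big /=.
rewrite exchange_big /=; apply: eq_bigr => k _; apply: eq_bigr => l _.
by rewrite mulr_suml; apply: eq_bigr => i _; ring.
Qed.

Definition bias_variance {n} (mu : 'cV[R]_n) (Om A : 'M[R]_n) : R :=
  sqnorm (A *m mu - mu) + \tr (A *m Om *m A^T).
End Expansion.

Section Risk.
Context {R : realType} d (T : measurableType d) (P : probability T R).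
Local Open Scope ereal_scope.

Lemma expectation_fsum (I : finType) (f : I -> T -> R) :
  (forall i, f i \in Lfun P 1) ->
  'E_P[fun t => (\sum_i f i t)%R] = \sum_i 'E_P[f i] /\ (fun t => \sum_i f i t)%R \in Lfun P 1.
Proof.
move=> f1; rewrite -fct_sumE -(big_map f xpredT id) expectation_sum ?big_map.
- by split=> //; apply: rpred_sum.
- by move=> _ /mapP[i _ ->].
Qed.

Variables (n : nat) (eps : 'I_n -> T -> R) (Om : 'M[R]_n).
Hypothesis eps_centered : forall i, eps i \in Lfun P 2%:E /\ 'E_P[eps i] = 0.
Hypothesis eps_cov : forall i j, covariance P (eps i) (eps j) = (Om i j)%:E.

Let eps_L1 i : eps i \in Lfun P 1.
Proof.
by apply: Lfun_subset12 (proj1 (eps_centered i)); exact: fin_num_measure.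
Qed.

Let eps_mul_L1 i j : (eps i \* eps j)%R \in Lfun P 1.
Proof. by apply: Lfun2_mul_Lfun1; [case: (eps_centered i)|case: (eps_centered j)]. Qed.

Lemma expectation_quadratic (s : R) (al : 'I_n -> R) (be : 'I_n -> 'I_n -> R) :
  'E_P[fun t => s + \sum_k al k * eps k t + \sum_k \sum_l be k l * (eps k t * eps l t)]%R
  = (s + \sum_k \sum_l be k l * Om k l)%:E.
Proof.
have Emul k l : 'E_P[(eps k \* eps l)%R] = (Om k l)%:E.
  have := covarianceE (eps_L1 k) (eps_L1 l) (eps_mul_L1 k l).
  by rewrite eps_cov (proj2 (eps_centered k)) mul0e sube0 => <-.
have lin_L1 k : (al k \o* eps k)%R \in Lfun P 1 by exact: Lfun_scale.
have quad_L1 k l : (be k l \o* (eps k \* eps l))%R \in Lfun P 1 by exact: Lfun_scale.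
have [Elin lin_sum_L1] := expectation_fsum lin_L1.
have Erow k := expectation_fsum (quad_L1 k).
have [Equad quad_sum_L1] := expectation_fsum (fun k => proj2 (Erow k)).
have -> : (fun t => s + \sum_k al k * eps k t + \sum_k \sum_l be k l * (eps k t * eps l t))%R
    = ((cst s \+ (fun t => \sum_k (al k \o* eps k) t))
       \+ (fun t => \sum_k (fun t => \sum_l (be k l \o* (eps k \* eps l)) t) t))%R.
  apply/funext => t /=; congr (_ + _ + _)%R; apply: eq_bigr => k _.
    exact: mulrC.
  by apply: eq_bigr => l _; rewrite mulrC.
rewrite expectationD ?rpredD ?Lfun_cst // expectationD ?Lfun_cst //.
rewrite expectation_cst Elin Equad.
under eq_bigr do rewrite expectationZl // (proj2 (eps_centered _)) mule0.
under [X in _ + _ + X]eq_bigr do rewrite (proj1 (Erow _)).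
rewrite big1_eq adde0 EFinD -sumEFin; congr (_ + _); apply: eq_bigr => k _.
by rewrite -sumEFin; apply: eq_bigr => l _; rewrite expectationZl // Emul.
Qed.

Lemma risk_bias_variance (mu : 'cV[R]_n) (A : 'M[R]_n) :
  risk P mu eps A = (bias_variance mu Om A)%:E.
Proof.
rewrite /risk /bias_variance.
have -> : (fun t => sqnorm (A *m (mu + \col_i eps i t) - mu)) =
  (fun t => sqnorm (A *m mu - mu)
     + \sum_k (2 * \sum_i (A *m mu - mu) i 0 * A i k) * eps k t
     + \sum_k \sum_l (\sum_i A i k * A i l) * (eps k t * eps l t))%R.
  apply/funext => t; rewrite mulmxDr addrAC sqnormD_mul.
  by congr (_ + _ + _)%R; apply: eq_bigr => k _; [|apply: eq_bigr => l _]; rewrite !mxE.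
by rewrite expectation_quadratic mxtrace_mul_trmx.
Qed.
End Risk.

Section TraceForms.
Context {R : realType} (n : nat).

Definition posdef (Om : 'M[R]_n) := forall v : 'cV[R]_n, v != 0 -> 0 < (v^T *m Om *m v) 0 0.

Lemma sqnorm_mxtrace (v : 'cV[R]_n) : sqnorm v = \tr (v *m v^T).
Proof. by apply: eq_bigr => i _; rewrite !mxE big_ord1 !mxE expr2. Qed.

Lemma sqnorm_mul (B : 'M[R]_n) (mu : 'cV[R]_n) :
  sqnorm (B *m mu) = \tr (B^T *m B *m (mu *m mu^T)).
Proof. by rewrite sqnorm_mxtrace trmx_mul !mulmxA mxtrace_mulC !mulmxA. Qed.

Lemma quadform_mxtrace (A : 'M[R]_n) (mu : 'cV[R]_n) :
  (mu^T *m A *m mu) 0 0 = \tr (A *m (mu *m mu^T)).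
Proof. by rewrite mulmxA mxtrace_mulC mulmxA /mxtrace big_ord1. Qed.

Lemma mxtrace_lincomb_mul (I : finType) (c : I -> R) (A : I -> 'M[R]_n) (S : 'M[R]_n) :
  \tr ((\sum_i c i *: A i) *m S) = \sum_i c i * \tr (A i *m S).
Proof.
rewrite mulmx_suml raddf_sum; apply: eq_bigr => i _.
by rewrite /= -scalemxAl mxtraceZ.
Qed.

Section Idempotent.
Variables (D Om : 'M[R]_n).
Hypotheses (D_sym : D^T = D) (D_idem : D *m D = D) (Om_pd : posdef Om).

Let mxtrace_idem_rows : \tr (D *m Om) = \sum_i ((row i D) *m Om *m (row i D)^T) 0 0.
Proof.
rewrite -[in LHS]D_idem -{1}D_sym -mulmxA mxtrace_mulC /mxtrace.
apply: eq_bigr => i _; rewrite !mxE; apply: eq_bigr => l _; rewrite !mxE; congr (_ * _).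
by apply: eq_bigr => k _; rewrite !mxE.
Qed.

Let row_form_ge0 i : 0 <= ((row i D) *m Om *m (row i D)^T) 0 0.
Proof.
have [->|ri0] := eqVneq (row i D) 0; first by rewrite !mul0mx mxE.
by apply: ltW; have := Om_pd (v := (row i D)^T); rewrite trmxK trmx_eq0; apply.
Qed.

Lemma mxtrace_idem_ge0 : 0 <= \tr (D *m Om).
Proof. by rewrite mxtrace_idem_rows; apply: sumr_ge0 => i _; exact: row_form_ge0. Qed.

Lemma mxtrace_idem_gt0 : D != 0 -> 0 < \tr (D *m Om).
Proof.
move=> D0; have [i ri0] : exists i, row i D != 0.
  apply/existsP; apply: contraR D0 => /existsPn rows0; apply/eqP/row_matrixP => i.
  by rewrite row0; apply/eqP; have := rows0 i; rewrite negbK.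
rewrite mxtrace_idem_rows (bigD1 i) //=; apply: ltr_wpDr.
  by apply: sumr_ge0 => j _; exact: row_form_ge0.
by have := Om_pd (v := (row i D)^T); rewrite trmxK trmx_eq0; apply.
Qed.
End Idempotent.
End TraceForms.

(* [w 0 m] is the weight of model [m.+1], so this is the weight of the models above [j]. *)
Definition tail_weight {R : realType} M (w : 'rV[R]_M) (j : nat) : R :=
  \sum_(m < M | (j <= m)%N) w 0 m.

Section Chain.
Context {R : realType} (n K : nat) (Q : nat -> 'M[R]_n).
Hypothesis Q0 : Q 0%N = 0.
Hypothesis QK : Q K = 1%:M.
Hypothesis Q_sym : forall m, (m <= K)%N -> (Q m)^T = Q m.
Hypothesis Q_mul : forall m l, (m <= K)%N -> (l <= K)%N -> Q m *m Q l = Q (minn m l).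

Definition chain_incr j := Q j.+1 - Q j.
Local Notation D := chain_incr.

Lemma chain_incr_sym j : (j < K)%N -> (D j)^T = D j.
Proof. by move=> jK; rewrite /D linearB /= !Q_sym // ltnW. Qed.

Lemma chain_incr_mul i j : (i < K)%N -> (j < K)%N ->
  D i *m D j = if i == j then D i else 0.
Proof.
move=> iK jK; rewrite /D mulmxBl !mulmxBr !Q_mul ?(ltnW iK) ?(ltnW jK) //.
case: ltngtP => [ij|ji|<-].
- have -> : minn i.+1 j.+1 = i.+1 by lia.
  have -> : minn i.+1 j = i.+1 by lia.
  have -> : minn i j.+1 = i by lia.
  by rewrite !subrr.
- have -> : minn i.+1 j.+1 = j.+1 by lia.
  have -> : minn i.+1 j = j by lia.
  have -> : minn i j.+1 = j.+1 by lia.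
  by rewrite subrr.
- have -> : minn i.+1 i = i by lia.
  have -> : minn i i.+1 = i by lia.
  by rewrite minnn subrr subr0.
Qed.

Lemma sum_chain_incr m : (m <= K)%N -> \sum_(j < K | (j < m)%N) D j = Q m.
Proof.
move=> mK; rewrite -(big_ord_widen _ D mK) -(big_mkord xpredT D).
by rewrite telescope_sumr // Q0 subr0.
Qed.

Lemma sum_chain_incr_all : \sum_(j < K) D j = 1%:M.
Proof. by rewrite -QK -(sum_chain_incr (leqnn K)); apply: eq_bigl => j; rewrite ltn_ord. Qed.

Lemma chain_lincomb_sym (c : 'I_K -> R) : (\sum_j c j *: D j)^T = \sum_j c j *: D j.
Proof. by rewrite raddf_sum; apply: eq_bigr => j _ /=; rewrite linearZ /= chain_incr_sym. Qed.

Lemma chain_lincomb_mul (c c' : 'I_K -> R) :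
  (\sum_j c j *: D j) *m (\sum_j c' j *: D j) = \sum_j (c j * c' j) *: D j.
Proof.
rewrite mulmx_suml; apply: eq_bigr => i _; rewrite mulmx_sumr (bigD1 i) //= big1.
  by rewrite -scalemxAl -scalemxAr scalerA chain_incr_mul // eqxx addr0.
move=> j ji; rewrite -scalemxAl -scalemxAr chain_incr_mul //.
by rewrite eq_sym (inj_eq val_inj) (negPf ji) !scaler0.
Qed.

Lemma mixture_chain_incr M (w : 'rV[R]_M) : (M <= K)%N ->
  \sum_(m < M) w 0 m *: Q m.+1 = \sum_(j < K) tail_weight w j *: D j.
Proof.
move=> MK; under eq_bigr => m _ do
  rewrite -(sum_chain_incr (leq_trans (ltn_ord m) MK)) scaler_sumr big_mkcond /=.
rewrite exchange_big /=; apply: eq_bigr => j _.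
rewrite /tail_weight scaler_suml [RHS]big_mkcond /=; apply: eq_bigr => m _.
by rewrite ltnS; case: ifP; rewrite ?scale0r.
Qed.

Lemma bias_variance_chain M (w : 'rV[R]_M) (mu : 'cV[R]_n) (Om : 'M[R]_n) : (M <= K)%N ->
  bias_variance mu Om (\sum_(m < M) w 0 m *: Q m.+1) =
  \sum_(j < K) ((1 - tail_weight w j) ^+ 2 * \tr (D j *m (mu *m mu^T))
                + tail_weight w j ^+ 2 * \tr (D j *m Om)).
Proof.
move=> MK; rewrite /bias_variance mixture_chain_incr //.
set g := tail_weight w; set G := \sum_(j < K) g j *: D j.
have residual : G *m mu - mu = (\sum_(j < K) (g j - 1) *: D j) *m mu.
  rewrite -{2}(mul1mx mu) -mulmxBl; congr (_ *m _).
  rewrite -sum_chain_incr_all -sumrB; apply: eq_bigr => j _.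
  by rewrite scalerBl scale1r.
rewrite residual sqnorm_mul chain_lincomb_sym chain_lincomb_mul.
rewrite [\tr (G *m _ *m _)]mxtrace_mulC [G^T *m _]mulmxA /G chain_lincomb_sym chain_lincomb_mul.
rewrite !mxtrace_lincomb_mul -big_split /=; apply: eq_bigr => j _.
by rewrite -!expr2 -sqrrN opprB.
Qed.
End Chain.

Section Threshold.
Context {R : realFieldType}.

Lemma le_twice_shrinkage (a b c g : R) : 0 <= c -> c <= a -> c <= b ->
  c <= 2 * ((1 - g) ^+ 2 * a + g ^+ 2 * b).
Proof.
move=> c0 ca cb.
have ha : (1 - g) ^+ 2 * c <= (1 - g) ^+ 2 * a by rewrite ler_wpM2l ?sqr_ge0.
have hb : g ^+ 2 * c <= g ^+ 2 * b by rewrite ler_wpM2l ?sqr_ge0.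
have : 0 <= c * (2 * g - 1) ^+ 2 by rewrite mulr_ge0 ?sqr_ge0.
nra.
Qed.

Lemma ratio_threshold (a b : nat -> R) M : (0 < M)%N ->
  (forall j, (j < M)%N -> 0 < b j) ->
  (forall j, (j.+1 < M)%N -> a j.+1 / b j.+1 <= a j / b j) ->
  exists2 k, (k < M)%N &
    forall j, (0 < j < M)%N -> if (j <= k)%N then b j <= a j else a j <= b j.
Proof.
move=> M0 b_gt0 ratio_le.
have ratio_mono : {in [pred j | (j < M)%N] &, {homo (fun j => a j / b j) : i j / (i <= j)%N >-> j <= i}}.
  apply: homo_leq_in => [x|y x z yx zy|i j _ jM l /andP[_ lj]|i _ iM].
  - exact: lexx.
  - exact: le_trans zy yx.
  - exact: ltn_trans lj jM.
  - exact: ratio_le.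
pose k := (\max_(j < M | (b j < a j)%R) (j : nat))%N.
have kM : (k < M)%N.
  case: M M0 {b_gt0 ratio_le ratio_mono} @k => // M' _ /=.
  by rewrite ltnS; apply/bigmax_leqP => i _; rewrite -ltnS.
have k_spec : k = 0%N \/ b k < a k.
  rewrite /k; elim/big_ind: _ => [|x y|i]; [by left| |by right].
  by case: (leqP x y) => h; rewrite ?(maxn_idPr h) ?(maxn_idPl (ltnW h)).
exists k => // j /andP[j0 jM]; case: ifP => jk.
  have bk_lt_ak : b k < a k.
    by case: k_spec => // k0; move: (leq_trans j0 jk); rewrite k0.
  have := ratio_mono j k jM kM jk.
  rewrite ler_pdivrMr ?b_gt0 // mulrAC ler_pdivlMr ?b_gt0 //.
  have bj := b_gt0 j jM; have bk := b_gt0 k kM.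
  have : 0 < (a k - b k) * b j by rewrite mulr_gt0 ?subr_gt0.
  nra.
rewrite leNgt; apply: contraFN jk => bj_lt_aj.
exact: (@leq_bigmax_cond _ (fun i : 'I_M => (b i < a i)%R) (fun i => i) (Ordinal jM)).
Qed.
End Threshold.

Definition unit_weight (R : realType) M (k : 'I_M) : 'rV[R]_M := \row_i (i == k)%:R.

Section Weights.
Context {R : realType} (M : nat).

Lemma unit_weight_simplex (k : 'I_M) : in_simplex (unit_weight R k).
Proof.
split=> [m|]; first by rewrite mxE; case: (m == k); rewrite /= ?ler01 ?lexx.
rewrite (bigD1 k) //= big1 ?addr0 => [|m /negPf mk]; by rewrite mxE ?eqxx ?mk.
Qed.

Lemma lincomb_unit_weight (V : lmodType R) (F : 'I_M -> V) (k : 'I_M) :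
  \sum_(m < M) unit_weight R k 0 m *: F m = F k.
Proof.
rewrite (bigD1 k) //= big1 ?addr0 => [|m /negPf mk]; first by rewrite mxE eqxx scale1r.
by rewrite mxE mk scale0r.
Qed.

Lemma tail_weight_unit (k : 'I_M) j : tail_weight (unit_weight R k) j = (j <= k)%:R.
Proof.
rewrite /tail_weight big_mkcond (bigD1 k) //= big1 ?addr0 => [|m /negPf mk].
  by rewrite mxE eqxx; case: ifP.
by rewrite mxE mk if_same.
Qed.

Lemma tail_weight0 (w : 'rV[R]_M) : in_simplex w -> tail_weight w 0 = 1.
Proof. by case=> _ <-. Qed.

Lemma tail_weight_size (w : 'rV[R]_M) : tail_weight w M = 0.
Proof. by rewrite /tail_weight big_pred0 // => m; rewrite leqNgt ltn_ord. Qed.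
End Weights.

Section ChainOracle.
Context {R : realType} (n M : nat) (Q : nat -> 'M[R]_n) (mu : 'cV[R]_n) (Om : 'M[R]_n).
Hypothesis M_gt0 : (0 < M)%N.
Hypothesis Q0 : Q 0%N = 0.
Hypothesis QK : Q M.+1 = 1%:M.
Hypothesis Q_sym : forall m, (m <= M.+1)%N -> (Q m)^T = Q m.
Hypothesis Q_mul : forall m l, (m <= M.+1)%N -> (l <= M.+1)%N -> Q m *m Q l = Q (minn m l).
Hypothesis Q_strict : forall j, (j < M)%N -> Q j.+1 != Q j.
Hypothesis Om_pd : posdef Om.

Local Notation D := (chain_incr Q).
Local Notation a j := (\tr (D j *m (mu *m mu^T))).
Local Notation b j := (\tr (D j *m Om)).

Hypothesis ratio_noninc : forall j, (j.+1 < M)%N -> a j.+1 / b j.+1 <= a j / b j.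

Let D_idem j : (j < M.+1)%N -> D j *m D j = D j.
Proof. by move=> jK; rewrite (chain_incr_mul Q_mul) // eqxx. Qed.

Let a_ge0 j : (j < M.+1)%N -> 0 <= a j.
Proof.
move=> jK; rewrite -D_idem // -{1}(chain_incr_sym Q_sym jK).
by rewrite -sqnorm_mul; apply: sumr_ge0 => i _; exact: sqr_ge0.
Qed.

Let b_ge0 j : (j < M.+1)%N -> 0 <= b j.
Proof.
by move=> jK; apply: mxtrace_idem_ge0 => //; [exact: (chain_incr_sym Q_sym)|exact: D_idem].
Qed.

Let b_gt0 j : (j < M)%N -> 0 < b j.
Proof.
move=> jM; apply: mxtrace_idem_gt0 => //; first exact: (chain_incr_sym Q_sym) (ltnW _).
- exact: D_idem (ltnW _).
- by rewrite subr_eq0 Q_strict.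
Qed.

Lemma chain_oracle_bound : exists k : 'I_M, forall w : 'rV[R]_M, in_simplex w ->
  bias_variance mu Om (Q k.+1) <= 2 * bias_variance mu Om (\sum_(m < M) w 0 m *: Q m.+1).
Proof.
have [k kM threshold] := ratio_threshold M_gt0 b_gt0 ratio_noninc.
exists (Ordinal kM) => w w_simplex.
rewrite -(lincomb_unit_weight (fun m : 'I_M => Q m.+1) (Ordinal kM)).
rewrite !(bias_variance_chain Q0 QK Q_sym Q_mul) // mulr_sumr; apply: ler_sum => j _.
rewrite tail_weight_unit /=.
have [aj bj] := (a_ge0 (ltn_ord j), b_ge0 (ltn_ord j)).
(* The terms j = 0 and j = M are the same for all weights in the simplex. *)
have same_weight : tail_weight w j = (j <= k)%:R ->
    (1 - (j <= k)%:R) ^+ 2 * a j + (j <= k)%:R ^+ 2 * b j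
    <= 2 * ((1 - tail_weight w j) ^+ 2 * a j + tail_weight w j ^+ 2 * b j).
  by move=> ->; rewrite ler_peMl ?ler1n // addr_ge0 // mulr_ge0 // sqr_ge0.
have [j0|j_gt0] := posnP j.
  by apply same_weight; rewrite j0 tail_weight0.
have [jM|jM] := ltnP j M; last first.
  have jE : (j : nat) = M by have := ltn_ord j; lia.
  by apply same_weight; rewrite jE tail_weight_size leqNgt kM.
have := threshold j; rewrite j_gt0 jM => /(_ isT).
case: leqP => jk thr; rewrite /= ?subrr ?subr0 expr0n expr1n /= ?mul0r ?add0r ?mul1r ?addr0.
- by apply: le_twice_shrinkage.
- by apply: le_twice_shrinkage; rewrite // ltW.
Qed.
End ChainOracle.

Section Projection.
Context {R : realType}.

Lemma projmx_sym n k (A : 'M[R]_(n, k)) : (projmx A)^T = projmx A.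
Proof. by rewrite /projmx !trmx_mul trmxK trmx_inv trmx_mul trmxK mulmxA. Qed.

Lemma projmx_col0 n (A : 'M[R]_(n, 0)) : projmx A = 0.
Proof. by rewrite /projmx (_ : A = 0) ?mul0mx //; apply/matrixP => i []. Qed.

Lemma unitmx_gram n k (A : 'M[R]_(n, k)) : \rank A = k -> A^T *m A \in unitmx.
Proof.
move=> rA; rewrite -row_free_unit; apply: inj_row_free => v vAA0.
set u := v *m A^T.
have uu0 : (u *m u^T) 0 0 = 0.
  by rewrite /u trmx_mul trmxK mulmxA -(mulmxA v) vAA0 mul0mx mxE.
have u0 : u = 0.
  apply/matrixP => i j; rewrite (ord1 i) [RHS]mxE.
  have u2_ge0 l : 0 <= u 0 l * u^T l 0 by rewrite [u^T _ _]mxE -expr2 sqr_ge0.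
  move: uu0; rewrite mxE => /(psumr_eq0P (fun l _ => u2_ge0 l)) u2_0.
  by have /eqP := u2_0 j isT; rewrite [u^T _ _]mxE mulf_eq0 => /orP[]/eqP.
apply/eqP; rewrite -(mulmx_free_eq0 _ (B := A^T)); first by rewrite -/u u0.
by rewrite -row_leq_rank mxrank_tr rA.
Qed.

Lemma projmx_mulK n k (A : 'M[R]_(n, k)) : \rank A = k -> projmx A *m A = A.
Proof. by move=> rA; rewrite /projmx -!mulmxA mulVmx ?unitmx_gram // mulmx1. Qed.

Lemma mulmx_projmx_fix n k (Q : 'M[R]_n) (A : 'M[R]_(n, k)) :
  Q *m A = A -> Q *m projmx A = projmx A.
Proof. by move=> QA; rewrite /projmx !mulmxA QA. Qed.

Lemma mxrank_projmx n k (A : 'M[R]_(n, k)) : (\rank (projmx A) <= k)%N.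
Proof. by rewrite /projmx -mulmxA (leq_trans (mxrankM_maxl _ _)) // rank_leq_col. Qed.

Lemma colsfirst_widen n p (X : 'M[R]_(n, p)) k l : (k <= l)%N ->
  colsfirst X k = colsfirst X l *m \matrix_(i < l, j < k) ((i : nat) == j)%:R.
Proof.
move=> kl; apply/matrixP => r j; rewrite !mxE (bigD1 (widen_ord kl j)) //= big1.
  by rewrite !mxE eqxx mulr1 addr0.
move=> i /negPf ij; rewrite !mxE.
suff -> : ((i : nat) == j) = false by rewrite mulr0.
by apply/negbTE; apply: contraFN ij => /eqP e; apply/eqP/val_inj.
Qed.
End Projection.

Section NestedModels.
Context {R : realType} (n p q : nat) (X : 'M[R]_(n, p)) (nu : nat -> nat).
Hypothesis nu0 : nu 0%N = 0%N.
Hypothesis nu_incr : forall m, (m < q)%N -> (nu m < nu m.+1)%N.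
Hypothesis X_rank : forall m, (1 <= m <= q)%N -> \rank (colsfirst X (nu m)) = nu m.

Lemma Pm0 : Pm X nu 0 = 0.
Proof. by rewrite /Pm nu0 projmx_col0. Qed.

Lemma Pm_sym m : (Pm X nu m)^T = Pm X nu m.
Proof. exact: projmx_sym. Qed.

Let nu_le m l : (m <= l <= q)%N -> (nu m <= nu l)%N.
Proof.
case/andP=> ml lq.
apply: (homo_leq_in (D := [pred j | (j <= q)%N]) (r := fun x y => (x <= y)%N)) => //.
- exact: leq_trans.
- by move=> i j _ jq x /andP[_ /ltnW xj]; rewrite inE (leq_trans xj jq).
- by move=> i _; rewrite inE => /nu_incr /ltnW.
- by rewrite inE (leq_trans ml lq).
Qed.

Let Pm_mulr m l : (m <= l <= q)%N -> Pm X nu l *m Pm X nu m = Pm X nu m.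
Proof.
case/andP=> ml lq; have [->|m_gt0] := posnP m; first by rewrite Pm0 mulmx0.
rewrite /Pm; apply: mulmx_projmx_fix.
rewrite (@colsfirst_widen _ _ _ X (nu m) (nu l)) ?nu_le ?ml //.
by rewrite mulmxA projmx_mulK // X_rank // lq (leq_trans m_gt0 ml).
Qed.

Lemma Pm_mul m l : (m <= q)%N -> (l <= q)%N -> Pm X nu m *m Pm X nu l = Pm X nu (minn m l).
Proof.
move=> mq lq; have [ml|lm] := leqP m l.
  by rewrite -[LHS]trmxK trmx_mul !Pm_sym Pm_mulr ?Pm_sym ?ml ?lq.
by rewrite Pm_mulr ?(ltnW lm) ?mq.
Qed.

Lemma Pm_neq_pred j : (0 < j <= q)%N -> Pm X nu j != Pm X nu j.-1.
Proof.
case/andP=> j_gt0 jq; apply/eqP => Pj_eq.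
have rj : \rank (colsfirst X (nu j)) = nu j by rewrite X_rank // j_gt0.
have : (nu j <= \rank (Pm X nu j.-1))%N.
  by rewrite -{1}rj -[X in \rank X](projmx_mulK rj) -/(Pm X nu j) Pj_eq mxrankM_maxl.
apply/negP; rewrite -ltnNge; apply: leq_ltn_trans (mxrank_projmx _) _.
by rewrite -{2}(prednK j_gt0) nu_incr // prednK.
Qed.

Section ModelChain.
Variable M : nat.
Hypothesis Mq : (M <= q)%N.

Definition model_chain j := if (j <= M)%N then Pm X nu j else 1%:M.

Lemma model_chainE j : (j <= M)%N -> model_chain j = Pm X nu j.
Proof. by rewrite /model_chain => ->. Qed.

Lemma model_chain0 : model_chain 0 = 0.
Proof. by rewrite model_chainE // Pm0. Qed.

Lemma model_chain_top : model_chain M.+1 = 1%:M.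
Proof. by rewrite /model_chain ltnn. Qed.

Lemma model_chain_sym m : (model_chain m)^T = model_chain m.
Proof. by rewrite /model_chain; case: ifP => _; rewrite ?Pm_sym ?trmx1. Qed.

Lemma model_chain_mul m l : (m <= M.+1)%N -> (l <= M.+1)%N ->
  model_chain m *m model_chain l = model_chain (minn m l).
Proof.
rewrite /model_chain; case: (leqP m M) => mM; case: (leqP l M) => lM mK lK.
- by rewrite Pm_mul ?(leq_trans _ Mq) // (leq_trans (geq_minl m l) mM).
- have -> : minn m l = m by lia.
  by rewrite mulmx1 mM.
- have -> : minn m l = l by lia.
  by rewrite mul1mx lM.
- have -> : minn m l = M.+1 by lia.
  by rewrite mulmx1 ltnn.
Qed.

Lemma model_chain_strict j : (j < M)%N -> model_chain j.+1 != model_chain j.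
Proof.
move=> jM; rewrite !model_chainE ?(ltnW jM) //.
by apply: Pm_neq_pred; rewrite /= (leq_trans jM Mq).
Qed.
End ModelChain.

Lemma nested_oracle_bound (mu : 'cV[R]_n) (Om : 'M[R]_n) M :
  (0 < n)%N -> (2 <= M <= q)%N -> posdef Om ->
  (forall m, (1 <= m < M)%N -> theta X nu mu Om m.+1 <= theta X nu mu Om m) ->
  exists k : 'I_M, forall w : 'rV[R]_M, in_simplex w ->
    bias_variance mu Om (Pm X nu k.+1) <= 2 * bias_variance mu Om (Pw X nu w).
Proof.
move=> n_gt0 /andP[M2 Mq] Om_pd theta_noninc.
have incrE j : (j < M)%N -> chain_incr (model_chain M) j = Pm X nu j.+1 - Pm X nu j.
  by move=> jM; rewrite /chain_incr !model_chainE // ltnW.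
pose a i := \tr (chain_incr (model_chain M) i *m (mu *m mu^T)).
pose b i := \tr (chain_incr (model_chain M) i *m Om).
have ratio_noninc j : (j.+1 < M)%N -> a j.+1 / b j.+1 <= a j / b j.
  move=> jM; have := theta_noninc j.+1; rewrite jM => /(_ isT).
  rewrite /theta /a /b !incrE ?(ltnW jM) // !quadform_mxtrace -!mulrA.
  by rewrite ler_pM2l // invr_gt0 ltr0n.
have [k k_bound] := chain_oracle_bound (ltnW M2) (model_chain0 M) (model_chain_top M)
  (fun m _ => model_chain_sym M m) (model_chain_mul Mq) (model_chain_strict Mq) Om_pd ratio_noninc.
exists k => w w_simplex.
have -> : Pm X nu k.+1 = model_chain M k.+1 by rewrite model_chainE.
have -> : Pw X nu w = \sum_(m < M) w 0 m *: model_chain M m.+1.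
  by apply: eq_bigr => m _; rewrite model_chainE.
exact: k_bound.
Qed.
End NestedModels.

Lemma argmin_le d (T : porderType d) (A : eqType) (P : A -> Prop) (f : A -> T) x0 :
  (forall x, P x -> x <> x0 -> (f x0 < f x)%O) -> forall x, P x -> (f x0 <= f x)%O.
Proof.
move=> x0_min x Px; case: (eqVneq x x0) => [->|/eqP x_neq]; first exact: lexx.
exact/ltW/x0_min.
Qed.

Theorem theorem1 (R : realType) (d : measure_display) (T : measurableType d)
  (P : probability T R)
  (p q M : nat -> nat) (nu : nat -> nat -> nat)
  (X : forall n : nat, 'M[R]_(n, p n)) (beta : forall n : nat, 'cV[R]_(p n))
  (Omega : forall n : nat, 'M[R]_n) (eps : forall n : nat, 'I_n -> T -> R)
  (mstar : nat -> nat) (wstar : forall n : nat, 'rV[R]_(M n)) (N0 : nat) :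
  (* setting, for every n >= N0 *)
  (forall n, (N0 <= n)%N -> (p n < n)%N) ->
  (forall n, (N0 <= n)%N ->
     nu n 0%N = 0%N /\ (forall m, (m < q n)%N -> (nu n m < nu n m.+1)%N) /\
     nu n (q n) = p n) ->
  (forall n, (N0 <= n)%N -> forall m, (1 <= m <= q n)%N ->
     \rank (colsfirst (X n) (nu n m)) = nu n m) ->
  (forall n, (N0 <= n)%N -> (2 <= M n <= q n)%N) ->
  (forall n, (N0 <= n)%N -> forall i : 'I_n,
     eps n i \in Lfun P 2%:E /\ ('E_P[eps n i] = 0)%E) ->
  (forall n, (N0 <= n)%N -> forall i j : 'I_n,
     covariance P (eps n i) (eps n j) = (Omega n i j)%:E) ->
  (forall n, (N0 <= n)%N -> forall v : 'cV[R]_n,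
     v != 0 -> 0 < (v^T *m Omega n *m v) 0 0) ->
  (* m_n^* : unique minimizer of R_n(m) over {1..M_n} *)
  (forall n, (N0 <= n)%N ->
     (1 <= mstar n <= M n)%N /\
     forall m, (1 <= m <= M n)%N -> m <> mstar n ->
       (risk P (X n *m beta n) (eps n) (Pm (X n) (nu n) (mstar n))
        < risk P (X n *m beta n) (eps n) (Pm (X n) (nu n) m))%E) ->
  (* w_n^* : unique minimizer of R_n(w) over W_n *)
  (forall n, (N0 <= n)%N ->
     in_simplex (wstar n) /\
     forall w : 'rV[R]_(M n), in_simplex w -> w <> wstar n ->
       (risk P (X n *m beta n) (eps n) (Pw (X n) (nu n) (wstar n))
        < risk P (X n *m beta n) (eps n) (Pw (X n) (nu n) w))%E) ->
  (* Assumption 1 *)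
  (exists C : R, exists N : nat, forall n, (N <= n)%N ->
     sqnorm (X n *m beta n) / n%:R <= C) ->
  (* Assumption 2 *)
  (exists c1 c2 : R, 0 < c1 /\ c1 <= c2 /\
     forall n, (N0 <= n)%N -> forall a : R, eigenvalue (Omega n) a ->
       c1 < a /\ a < c2) ->
  (* Assumption 3 *)
  (exists N : nat, forall n, (N <= n)%N -> forall m, (1 <= m < q n)%N ->
     theta (X n) (nu n) (X n *m beta n) (Omega n) m.+1
       <= theta (X n) (nu n) (X n *m beta n) (Omega n) m) ->
  (* Assumption 6 *)
  (exists N : nat, forall n, (N <= n)%N ->
     let Rn := fun m => risk P (X n *m beta n) (eps n) (Pm (X n) (nu n) m) in
     let dd := dn (X n) (nu n) (X n *m beta n) (Omega n) (q n) in
     exists m', (1 <= m' <= dd - 1)%N /\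
       (forall m, (2 <= m <= m')%N -> (Rn m < Rn (m - 1)%N)%E) /\
       (forall m, (m' < m <= dd)%N -> (Rn (m - 1)%N <= Rn m)%E) /\
       (Rn (dd - 1)%N < Rn dd)%E) ->
  (* conclusion: for all large n, R_n(m_star)/2 <= R_n(w_star) <= R_n(m_star) *)
  exists N : nat, forall n, (N <= n)%N ->
    ((2^-1)%:E * risk P (X n *m beta n) (eps n) (Pm (X n) (nu n) (mstar n))
       <= risk P (X n *m beta n) (eps n) (Pw (X n) (nu n) (wstar n)))%E /\
    (risk P (X n *m beta n) (eps n) (Pw (X n) (nu n) (wstar n))
       <= risk P (X n *m beta n) (eps n) (Pm (X n) (nu n) (mstar n)))%E.
Proof.
move=> p_lt_n nu_spec X_rank M_range eps_mom eps_cov Om_pd mstar_min wstar_min _ _ [N3 theta_noninc] _.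
exists (maxn N0 N3) => n; rewrite geq_max => /andP[nN0 nN3].
have [nu0 [nu_incr _]] := nu_spec n nN0.
have /andP[M2 Mq] := M_range n nN0.
have riskE := risk_bias_variance (eps_mom n nN0) (eps_cov n nN0) (X n *m beta n).
have n_gt0 : (0 < n)%N := leq_ltn_trans (leq0n _) (p_lt_n n nN0).
have theta_noninc_M m : (1 <= m < M n)%N -> theta (X n) (nu n) (X n *m beta n) (Omega n) m.+1
    <= theta (X n) (nu n) (X n *m beta n) (Omega n) m.
  by case/andP=> m1 mM; apply: theta_noninc; rewrite // m1 (leq_trans mM Mq).
have [k k_bound] := nested_oracle_bound nu0 nu_incr (X_rank n nN0) n_gt0 (M_range n nN0)
  (Om_pd n nN0) theta_noninc_M.
have [w_simplex w_min] := wstar_min n nN0.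
have [/andP[m1 mM] m_min] := mstar_min n nN0.
have mstar_le := argmin_le m_min; have wstar_le := argmin_le w_min.
split.
- have := mstar_le k.+1 (ltn_ord k); rewrite !riskE -EFinM !lee_fin.
  by have := k_bound _ w_simplex; lra.
- have mM' : ((mstar n).-1 < M n)%N by rewrite prednK.
  have := wstar_le _ (unit_weight_simplex (Ordinal mM')).
  by rewrite /Pw lincomb_unit_weight /= prednK.
Qed.
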